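(* Let $A,B\in M_n(\mathbb{R}_+)$ be nilpotent and let $C=[A,B]_\oplus=AB\oplus BA$. If the digraph $G_{A\oplus B}$ contains a directed cycle, then there exist indices $u,w$ such that $C_{uw}>0$.
   Context: Max algebra: $\mathbb{R}_+$ the nonnegative reals with $a\oplus b=\max\{a,b\}$ and ordinary multiplication; for $A,B\in M_n(\mathbb{R}_+)$, $(AB)_{ij}=\max_k a_{ik}b_{kj}$ and $(A\oplus B)_{ij}=\max\{a_{ij},b_{ij}\}$. A matrix $A$ is nilpotent if $A^k=0$ for some $k\in\mathbb{N}$ (powers in the max-product). The digraph $G_M$ of $M=(m_{ij})$ has vertices $\{1,\dots,n\}$ and an edge $i\to j$ iff $m_{ij}>0$. *)

From HB Require Import structures.
From mathcomp Require Import all_boot all_order all_algebra.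
Set Implicit Arguments. Unset Strict Implicit. Unset Printing Implicit Defensive.
Import Order.TTheory GRing.Theory Num.Theory.
Local Open Scope ring_scope.

Section MaxAlg.
Variable R : realFieldType.
Variable n : nat.

Definition nonneg_mx (A : 'M[R]_n) : Prop := forall i j, 0 <= A i j.

(* max-product: (AB)_{ij} = max_k a_ik b_kj  (max over nonnegative values, 0 as neutral) *)
Definition maxmul (A B : 'M[R]_n) : 'M[R]_n :=
  \matrix_(i, j) \big[Num.max/0]_(k < n) (A i k * B k j).

Definition maxadd (A B : 'M[R]_n) : 'M[R]_n :=
  \matrix_(i, j) Num.max (A i j) (B i j).

Fixpoint maxpow (A : 'M[R]_n) (k : nat) : 'M[R]_n :=
  match k with
  | 0 => 1%:M
  | k'.+1 => maxmul (maxpow A k') A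
  end.

Definition max_nilpotent (A : 'M[R]_n) : Prop := exists k : nat, maxpow A k = 0.

Definition maxcomm (A B : 'M[R]_n) : 'M[R]_n := maxadd (maxmul A B) (maxmul B A).

Definition digraph_edge (M : 'M[R]_n) : rel 'I_n := fun i j => 0 < M i j.

Definition has_dicycle (M : 'M[R]_n) : Prop :=
  exists (i : 'I_n) (s : seq 'I_n),
    s != [::] /\ path (digraph_edge M) i s /\ last i s = i.

End MaxAlg.

From mathcomp Require Import all_boot all_order all_algebra.
Import Order.TTheory GRing.Theory Num.Theory.
Set Implicit Arguments. Unset Strict Implicit.
Local Open Scope ring_scope.

(* If C had no positive entry, no A-edge of the digraph could be followed by a
   B-edge.  Take a cycle of G_(A (+) B).  If some
   cycle edge is an A-edge, the vertices whose outgoing cycle edge is an A-edge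
   are closed under the cycle successor, so G_A has arbitrarily long walks and
   no max power of A vanishes; otherwise every cycle edge is a B-edge and the
   same holds for B.  Only positivity of products of positive entries is used. *)

Section MaxAlgebraWalks.
Variables (R : realFieldType) (n : nat).
Implicit Types (A B M : 'M[R]_n) (P : pred 'I_n).

Lemma maxmul_ge A B i k j : A i k * B k j <= maxmul A B i j.
Proof. by rewrite /maxmul mxE; apply: le_bigmax (fun k => A i k * B k j) k. Qed.

Lemma maxmul_gt0 A B i k j : 0 < A i k -> 0 < B k j -> 0 < maxmul A B i j.
Proof.
by move=> Aik Bkj; apply: lt_le_trans (maxmul_ge A B i k j); exact: mulr_gt0.
Qed.

Lemma maxadd_gt0 A B i j : (0 < maxadd A B i j) = (0 < A i j) || (0 < B i j).
Proof. by rewrite mxE lt_max. Qed.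

Lemma maxcomm_gt0l A B u k w : 0 < A u k -> 0 < B k w -> 0 < maxcomm A B u w.
Proof. by move=> Auk Bkw; rewrite maxadd_gt0 (maxmul_gt0 Auk Bkw). Qed.

Lemma maxpow_gt0_closed M P i :
    P i -> (forall x, P x -> exists2 y, P y & 0 < M x y) ->
  forall k, exists2 y, P y & 0 < maxpow M k i y.
Proof.
move=> Pi closedP; elim=> [|k [y Py Mkiy]]; first by exists i; rewrite ?mxE ?eqxx.
by have [z Pz Myz] := closedP y Py; exists z; last exact: maxmul_gt0 Mkiy Myz.
Qed.

Lemma not_max_nilpotent_closed M P i :
  P i -> (forall x, P x -> exists2 y, P y & 0 < M x y) -> ~ max_nilpotent M.
Proof.
move=> Pi closedP [k Mk0]; have [y _] := maxpow_gt0_closed Pi closedP k.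
by rewrite Mk0 mxE ltxx.
Qed.

Lemma has_dicycle_cycle M :
  has_dicycle M -> exists i s, cycle (digraph_edge M) (i :: s).
Proof.
case=> i [s [+ [iP]]]; case/lastP: s iP => [//|s x] iP _.
rewrite last_rcons => x_i.
by exists i, s; rewrite -x_i in iP *.
Qed.

End MaxAlgebraWalks.

Theorem lemma3p8 (R : realFieldType) (n : nat) (A B : 'M[R]_n) :
  nonneg_mx A -> nonneg_mx B ->
  max_nilpotent A -> max_nilpotent B ->
  has_dicycle (maxadd A B) ->
  exists u w : 'I_n, 0 < maxcomm A B u w.
Proof.
move=> _ _ nilA nilB /has_dicycle_cycle[i [s cyc]]; set c := i :: s.
have [/existsP[u /existsP[w Cuw]] | /existsPn noC] :=
  boolP [exists u, exists w, 0 < maxcomm A B u w]; first by exists u, w.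
exfalso; have noAB u k w : 0 < A u k -> 0 < B k w -> False.
  move=> Auk Bkw; move/existsPn: (noC u) => /(_ w).
  by rewrite (maxcomm_gt0l Auk Bkw).
have edge x : x \in c -> (0 < A x (next c x)) || (0 < B x (next c x)).
  by move/(next_cycle cyc); rewrite /digraph_edge maxadd_gt0.
have next_in x : x \in c -> next c x \in c by rewrite mem_next.
have [/existsP[x0 /andP[x0c Ax0]] | /existsPn noA] :=
  boolP [exists x, (x \in c) && (0 < A x (next c x))].
- pose P := [pred x in c | 0 < A x (next c x)].
  apply: (not_max_nilpotent_closed (P := P) (i := x0) _ _ nilA).
    exact/andP.
  move=> x /andP[xc Ax]; exists (next c x) => //=; rewrite next_in //=.
  by have /orP[// | Bnx] := edge _ (next_in _ xc); case: (noAB _ _ _ Ax Bnx).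
- apply: (not_max_nilpotent_closed (P := [pred x in c]) (mem_head i s) _ nilB).
  move=> x /= xc; exists (next c x); first exact: next_in.
  by have /orP[Ax | //] := edge _ xc; move: (noA x); rewrite xc Ax.
Qed.
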